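(* Let $X$ be a compact metric space, $T:X\to X$ continuous, $\Phi=\{\phi_n\}$ a supadditive potential on $X$, $k$ a positive integer, and $\mu$ an ergodic $T$-invariant Borel probability measure. Then there is a constant $C$ such that for every $\eta>0$ there exists $\epsilon_0>0$ such that for all $0<\epsilon<\epsilon_0$, $n\ge1$ and $\delta\in(0,1)$, \[ P_\mu(T,\Phi,n,\epsilon,\delta)\ge e^{-n\eta-C}\,P_\mu\big(T,\tfrac{\phi_k}{k},n,\epsilon,\delta\big), \] and consequently $P_\mu(T,\Phi)\ge P_\mu\big(T,\tfrac{\phi_k}{k}\big)$.
   Context: $B_n(x,\epsilon)=\{y:d(T^ix,T^iy)<\epsilon,\ 0\le i\le n-1\}$. Supadditive potential: continuous $\phi_n$ with $\phi_{n+m}(x)\ge\phi_n(x)+\phi_m(T^nx)$. $F\subseteq X$ is $(n,\epsilon,\delta)$-spanning if $\mu(\bigcup_{x\in F}B_n(x,\epsilon))\ge1-\delta$. For $\Phi$: $P_\mu(T,\Phi,n,\epsilon,\delta)=\inf\{\sum_{x\in F}e^{\phi_n(x)}:F\ (n,\epsilon,\delta)\text{-spanning}\}$ and $P_\mu(T,\Phi)=\lim_{\delta\to0}\lim_{\epsilon\to0}\limsup_{n\to\infty}\frac1n\log P_\mu(T,\Phi,n,\epsilon,\delta)$. For a continuous function $\psi$ with $g_n=\sum_{i=0}^{n-1}\psi\circ T^i$: $P_\mu(T,\psi,n,\epsilon,\delta)=\inf\{\sum_{x\in F}\exp(\sup_{y\in B_n(x,\epsilon)}g_n(y)):F\ (n,\epsilon,\delta)\text{-spanning}\}$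 and $P_\mu(T,\psi)=\lim_{\delta\to0}\liminf_{\epsilon\to0}\limsup_{n\to\infty}\frac1n\log P_\mu(T,\psi,n,\epsilon,\delta)$. *)

From HB Require Import structures.
From mathcomp Require Import all_boot all_order all_algebra finmap.
From mathcomp Require Import all_classical all_reals all_analysis.
Set Implicit Arguments. Unset Strict Implicit. Unset Printing Implicit Defensive.
Import Order.TTheory GRing.Theory Num.Theory.
Import numFieldNormedType.Exports.
Local Open Scope classical_set_scope.
Local Open Scope ring_scope.

(* Metric spaces with a distinguished point (needed to form the Borel
   measurable type; harmless since X carries a probability measure). *)
#[short(type="pointedMetricType")]
HB.structure Definition PointedMetric (K : numDomainType) :=
  { M of Metric K M & isPointed M }.

Section Defs.
Context {R : realType} {X : pointedMetricType R}.

Definition borel_space := g_sigma_algebraType (@open X).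

Definition bowen_ball (T : X -> X) (n : nat) (x : X) (eps : R) : set X :=
  [set y | forall i : nat, (i < n)%N -> mdist (iter i T x) (iter i T y) < eps].

Definition supadditive_potential (T : X -> X) (phi : nat -> X -> R) : Prop :=
  (forall n, continuous (phi n)) /\
  (forall n m x, (0 < n)%N -> (0 < m)%N ->
     phi n x + phi m (iter n T x) <= phi (n + m)%N x).

Definition T_invariant (T : X -> X) (mu : probability borel_space R) : Prop :=
  forall A : set borel_space, measurable A -> mu (T @^-1` A) = mu A.

Definition ergodic (T : X -> X) (mu : probability borel_space R) : Prop :=
  forall A : set borel_space, measurable A -> T @^-1` A = A ->
    mu A = 0%E \/ mu A = 1%E.

Definition spanning (T : X -> X) (mu : probability borel_space R)
    (n : nat) (eps delta : R) (F : {fset X}) : Prop :=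
  (mu (\bigcup_(x in [set` F]) bowen_ball T n x eps) >= (1 - delta)%:E)%E.

Definition Pn_pot (T : X -> X) (mu : probability borel_space R)
    (phi : nat -> X -> R) (n : nat) (eps delta : R) : \bar R :=
  ereal_inf [set (\sum_(x <- F) expR (phi n x))%:E | F in spanning T mu n eps delta].

Definition birkhoff (T : X -> X) (psi : X -> R) (n : nat) (y : X) : R :=
  \sum_(i < n) psi (iter i T y).

Definition Pn_fun (T : X -> X) (mu : probability borel_space R)
    (psi : X -> R) (n : nat) (eps delta : R) : \bar R :=
  ereal_inf [set (\sum_(x <- F)
      expR (sup [set birkhoff T psi n y | y in bowen_ball T n x eps]))%:E
    | F in spanning T mu n eps delta].

Definition rate (n : nat) (v : \bar R) : \bar R := ((n%:R)^-1)%:E * lne v.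

Definition liminf_right0 (f : R -> \bar R) : \bar R :=
  ereal_sup [set ereal_inf [set f e | e in [set e | 0 < e < r]] | r in [set r | 0 < r]].

Definition pressure_pot (T : X -> X) (mu : probability borel_space R)
    (phi : nat -> X -> R) : \bar R :=
  lim ((fun delta => lim ((fun eps =>
          limn_esup (fun n => rate n (Pn_pot T mu phi n eps delta))) @ 0^'+)) @ 0^'+).

Definition pressure_fun (T : X -> X) (mu : probability borel_space R)
    (psi : X -> R) : \bar R :=
  lim ((fun delta => liminf_right0 (fun eps =>
          limn_esup (fun n => rate n (Pn_fun T mu psi n eps delta)))) @ 0^'+).

End Defs.

From HB Require Import structures.
From mathcomp Require Import all_boot all_order all_algebra finmap.
From mathcomp Require Import all_classical all_reals all_analysis.
From mathcomp Require Import zify lra.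
Set Implicit Arguments. Unset Strict Implicit. Unset Printing Implicit Defensive.
Import Order.TTheory GRing.Theory Num.Theory.
Import numFieldNormedType.Exports.
Local Open Scope classical_set_scope.
Local Open Scope ring_scope.

(* Fix a phase p < k and cut [0, n) into [0, p), about n/k blocks of length k
   and a remainder shorter than k.  Supadditivity bounds phi_n from below by
   the sum of phi_k over the blocks, up to an error controlled by
   M = max_{j <= k} sup |phi_j| at both ends.  Averaging over the k phases
   gives sum_{i<n} phi_k(T^i x) <= k phi_n(x) + 8kM.  Uniform continuity of
   phi_k moves the Birkhoff sum of phi_k/k from any point of the Bowen ball
   B_n(x, eps) to its centre at a cost of n eta, which compares the two
   spanning sums term by term with C = 8M.  Taking (1/n) log, the constant C
   disappears in the limsup over n; the limits in delta, and the one in eps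
   for Phi, are monotone and hence suprema, through which the inequality
   passes. *)

Lemma sum_nat_mul_residues (V : nmodType) (g : nat -> V) (m k : nat) :
  \sum_(0 <= i < m * k) g i = \sum_(0 <= p < k) \sum_(0 <= l < m) g (l * k + p)%N.
Proof.
elim: m => [|m IH]; first by rewrite mul0n big_geq // big1 // => p _; rewrite big_geq.
rewrite mulSn addnC (@big_cat_nat _ _ _ (m * k)) //=; last exact: leq_addr.
rewrite IH -{1}(add0n (m * k)%N) big_addn addKn -big_split /=.
by apply: eq_bigr => p _; rewrite [RHS]big_nat_recr //= addnC.
Qed.

Section SupadditiveBlocks.
Variables (R : realFieldType) (X : Type) (T : X -> X) (phi : nat -> X -> R).
Variables (k : nat) (M : R).
Hypothesis phi_supadd : forall n m x, (0 < n)%N -> (0 < m)%N ->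
  phi n x + phi m (iter n T x) <= phi (n + m)%N x.
Hypothesis phi_bounded : forall j x, (j <= k)%N -> `|phi j x| <= M.
Hypothesis k_gt0 : (0 < k)%N.

Let M_ge0 (x : X) : 0 <= M.
Proof. exact: le_trans (normr_ge0 _) (phi_bounded x (leq0n k)). Qed.

Let phi_ge j x : (j <= k)%N -> - M <= phi j x.
Proof. by move=> jk; have := phi_bounded x jk; rewrite ler_norml => /andP[]. Qed.

Let phi_le j x : (j <= k)%N -> phi j x <= M.
Proof. by move=> jk; have := phi_bounded x jk; rewrite ler_norml => /andP[]. Qed.

Lemma sum_blocks_le_phi m x : (0 < m)%N ->
  \sum_(0 <= l < m) phi k (iter (l * k) T x) <= phi (m * k)%N x.
Proof.
elim: m => // -[_ _|m IH _]; first by rewrite big_nat1 mul1n mul0n.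
rewrite big_nat_recr //= [(m.+2 * k)%N]mulSn addnC.
apply: le_trans (phi_supadd _ _ k_gt0); last by rewrite muln_gt0.
by rewrite lerD2r IH.
Qed.

Lemma phi_drop_head a b x : (a <= k)%N ->
  phi b (iter a T x) - 2 * M <= phi (a + b)%N x.
Proof.
have := M_ge0 x; case: a => [|a] M0 ak; first by rewrite add0n /=; lra.
case: b => [|b]; last first.
  by have := phi_supadd x (ltn0Sn a) (ltn0Sn b); have := phi_ge x ak; lra.
by rewrite addn0; have := phi_le (iter a.+1 T x) (leq0n k); have := phi_ge x ak; lra.
Qed.

Lemma phi_drop_tail b r x : (r <= k)%N -> phi b x - 2 * M <= phi (b + r)%N x.
Proof.
have := M_ge0 x; case: r => [|r] M0 rk; first by rewrite addn0; lra.
case: b => [|b].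
  by rewrite add0n; have := phi_le x (leq0n k); have := phi_ge x rk; lra.
have := phi_supadd x (ltn0Sn b) (ltn0Sn r); have := phi_ge (iter b.+1 T x) rk; lra.
Qed.

Lemma phase_blocks_le_phi p m r x : (p < k)%N -> (r < k)%N ->
  \sum_(0 <= l < m) phi k (iter (l * k) T (iter p T x)) - 5 * M
    <= phi (p + m * k + r)%N x.
Proof.
move=> pk rk; have M0 := M_ge0 x.
have head := phi_drop_head (m * k + r) x (ltnW pk); rewrite addnA in head.
have tail := phi_drop_tail (m * k) (iter p T x) (ltnW rk).
case: m head tail => [|m] head tail.
  by rewrite big_geq // mul0n; have := phi_ge (iter p T x) (leq0n k); lra.
by have := sum_blocks_le_phi (iter p T x) (ltn0Sn m); lra.
Qed.

(* [n %/ k - 1] blocks fit after every phase [p < k], so that the phases tile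
   [0, (n %/ k - 1) * k) in [sum_phik_le_phi]. *)
Lemma phase_blocks_le_phi_n p n x : (p < k)%N ->
  \sum_(0 <= l < n %/ k - 1) phi k (iter (l * k) T (iter p T x)) - 6 * M
    <= phi n x.
Proof.
move=> pk; have M0 := M_ge0 x; case: (leqP p n) => pn; last first.
  rewrite divn_small; last exact: ltn_trans pk.
  by rewrite big_geq //; have := phi_ge x (ltnW (ltn_trans pn pk)); lra.
set m := ((n - p) %/ k)%N.
have en : n = (p + m * k + (n - p) %% k)%N by rewrite -addnA -divn_eq subnKC.
have h := phase_blocks_le_phi m x pk (ltn_pmod (n - p) k_gt0); rewrite -en in h.
have m_ge : (n %/ k - 1 <= m)%N.
  rewrite /m; have := divn_eq n k; have := divn_eq (n - p) k.
  have := ltn_pmod n k_gt0; have := ltn_pmod (n - p) k_gt0; nia.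
have m_le : (m <= n %/ k)%N by rewrite /m leq_div2r // leq_subr.
rewrite (@big_cat_nat _ _ _ (n %/ k - 1)%N 0 m) //= in h.
suff : - M <= \sum_(n %/ k - 1 <= i < m) phi k (iter (i * k) T (iter p T x)) by lra.
apply: le_trans (_ : \sum_(n %/ k - 1 <= i < m) (- M) <= _); last first.
  by apply: ler_sum => i _; exact: phi_ge.
rewrite sumr_const_nat.
have : (m - (n %/ k - 1) <= 1)%N by lia.
by case: (m - (n %/ k - 1))%N => [|[|]] // _; rewrite mulr0n; lra.
Qed.

Lemma sum_phik_le_phi n x :
  \sum_(0 <= i < n) phi k (iter i T x) <= k%:R * phi n x + 8 * (k%:R * M).
Proof.
have M0 := M_ge0 x; set m := (n %/ k - 1)%N.
have mk_le : (m * k <= n)%N by rewrite /m mulnBl mul1n; have := leq_divM n k; lia.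
have tail_le : (n - m * k <= 2 * k)%N.
  by rewrite /m; have := divn_eq n k; have := ltn_pmod n k_gt0; nia.
rewrite (@big_cat_nat _ _ _ (m * k)) //=.
have tail : \sum_(m * k <= i < n) phi k (iter i T x) <= M *+ (2 * k).
  apply: le_trans (_ : \sum_(m * k <= i < n) M <= _).
    by apply: ler_sum => i _; exact: phi_le.
  by rewrite sumr_const_nat; apply: ler_wpMn2l.
have body : \sum_(0 <= i < m * k) phi k (iter i T x) <= k%:R * (phi n x + 6 * M).
  rewrite sum_nat_mul_residues.
  apply: le_trans (_ : \sum_(0 <= p < k) (phi n x + 6 * M) <= _); last first.
    by rewrite sumr_const_nat subn0 -(mulr_natl (phi n x + 6 * M)).
  rewrite !big_nat; apply: ler_sum => p /andP[_ pk].
  have := phase_blocks_le_phi_n n x pk; rewrite -/m.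
  under eq_bigr do rewrite -iterD.
  lra.
move: tail body; rewrite -(mulr_natl M (2 * k)) natrM; nra.
Qed.

End SupadditiveBlocks.

Lemma compact_unif_continuous (R : realType) (X : metricType R) (f : X -> R) :
  compact [set: X] -> continuous f ->
  forall eta : R, 0 < eta -> exists2 d : R, 0 < d &
    forall a b : X, mdist a b < d -> `|f a - f b| < eta.
Proof.
move=> cpt cf eta eta0.
have cover := (compact_near_coveringP [set: X]).1 cpt R (0^'+)
  (fun d a => forall b, mdist a b < d -> `|f a - f b| < eta).
have : \forall d \near 0^'+, [set: X] `<=`
    (fun a => forall b, mdist a b < d -> `|f a - f b| < eta).
  apply: cover => x _.
  have eta2 : 0 < eta / 2 by rewrite divr_gt0.
  have /cvgrPdist_lt /(_ _ eta2) /nbhs_ballP[r /= r0 fr] := cf x.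
  have r2 : 0 < r / 2 by rewrite divr_gt0.
  exists (ball x (r / 2), [set d | 0 < d < r / 2]) => /=.
    split; first exact: nbhsx_ballx.
    near=> d; apply/andP; split; near: d; [exact: nbhs_right_gt | exact: nbhs_right_lt].
  case=> a d [/= xa /andP[d0 dr]] b ab; rewrite ballEmdist /= in xa.
  have fa : `|f x - f a| < eta / 2 by apply: fr; rewrite ballEmdist /=; lra.
  have fb : `|f x - f b| < eta / 2.
    by apply: fr; rewrite ballEmdist /=; have := metric_triangle x a b; lra.
  by have := ler_distD (f x) (f a) (f b); rewrite distrC in fa; lra.
move=> unif; have [d [d0 fd]] := filter_ex (filterI (nbhs_right_gt (0:R)) unif).
by exists d => // a b; apply: fd.
Unshelve. all: by end_near. Qed.

Lemma compact_bounded_family (R : realType) (X : metricType R) (f : nat -> X -> R) k :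
  compact [set: X] -> (forall n, continuous (f n)) ->
  exists M : R, forall j x, (j <= k)%N -> `|f j x| <= M.
Proof.
move=> cpt cf.
have bounded_fn n : exists M : R, forall x, `|f n x| <= M.
  have /ex_strict_bound_gt0[M _ fM] : bounded_set (f n @` [set: X]).
    by apply/compact_bounded/continuous_compact => //; exact: continuous_subspaceT.
  by exists M => x; apply/ltW/fM; exists x.
elim: k => [|k [M fM]].
  by have [M fM] := bounded_fn 0%N; exists M => j x; rewrite leqn0 => /eqP ->.
have [N fN] := bounded_fn k.+1; exists (Num.max M N) => j x.
rewrite leq_eqVlt => /orP[/eqP ->|jk]; rewrite le_max; first by rewrite fN orbT.
by rewrite fM.
Qed.

Lemma bowen_sup_birkhoff_le (R : realType) (X : pointedMetricType R) (T : X -> X)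
    (phi : nat -> X -> R) k (M eta eps : R) n (x : X) :
  (forall n m x, (0 < n)%N -> (0 < m)%N ->
     phi n x + phi m (iter n T x) <= phi (n + m)%N x) ->
  (forall j x, (j <= k)%N -> `|phi j x| <= M) -> (0 < k)%N -> 0 < eps ->
  (forall a b : X, mdist a b < eps -> `|phi k a - phi k b| < k%:R * eta) ->
  sup [set birkhoff T (fun x => phi k x / k%:R) n y | y in bowen_ball T n x eps]
    <= phi n x + 8 * M + n%:R * eta.
Proof.
move=> phi_supadd phi_bounded k_gt0 eps0 phik_cont.
have k_pos : (0 : R) < k%:R by rewrite ltr0n.
apply: ge_sup.
  by exists (birkhoff T (fun x => phi k x / k%:R) n x), x => // i _; rewrite mdistxx.
move=> _ [y yB <-]; rewrite /birkhoff.
apply: le_trans (_ : \sum_(i < n) ((phi k (iter i T x) + k%:R * eta) / k%:R) <= _).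
  apply: ler_sum => i _; rewrite ler_pM2r ?invr_gt0 //.
  by have := phik_cont _ _ (yB i (ltn_ord i)); rewrite ltr_norml; lra.
rewrite -mulr_suml big_split /= sumr_const card_ord -mulr_natl ler_pdivrMr ?mulr1 //.
have := sum_phik_le_phi phi_supadd phi_bounded k_gt0 n x; rewrite big_mkord; nra.
Qed.

Lemma Pn_fun_le_Pn_pot (R : realType) (X : pointedMetricType R) (T : X -> X)
    (phi : nat -> X -> R) (k : nat) (mu : probability borel_space R) :
  compact [set: X] -> supadditive_potential T phi -> (0 < k)%N ->
  exists C : R, forall eta : R, 0 < eta ->
    exists2 eps0 : R, 0 < eps0 &
      forall (eps : R) (n : nat) (delta : R),
        0 < eps < eps0 -> (0 < n)%N -> 0 < delta < 1 ->
        ((expR (- (n%:R * eta) - C)%R)%:E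
           * Pn_fun T mu (fun x => (phi k x / k%:R)%R) n eps delta
         <= Pn_pot T mu phi n eps delta)%E.
Proof.
move=> cpt [phi_cont phi_supadd] k_gt0.
have [M phi_bounded] := compact_bounded_family k cpt phi_cont.
have k_pos : (0 : R) < k%:R by rewrite ltr0n.
exists (8 * M) => eta eta0.
have [d d0 phik_cont] := compact_unif_continuous cpt (phi_cont k)
  (mulr_gt0 k_pos eta0).
exists d => // eps n delta /andP[eps0 epsd] _ _.
apply: le_ereal_inf_tmp => _ [F FS <-].
set c := expR _; set psi := fun x => phi k x / k%:R.
apply: (@le_trans _ _ (c%:E * (\sum_(x <- F)
    expR (sup [set birkhoff T psi n y | y in bowen_ball T n x eps]))%:E)%E).
  apply: lee_wpmul2l; first by rewrite lee_fin expR_ge0.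
  by apply: ereal_inf_lbound; exists F.
rewrite -EFinM lee_fin mulr_sumr; apply: ler_sum => x _.
have := bowen_sup_birkhoff_le n x phi_supadd phi_bounded k_gt0 eps0
  (fun a b ab => phik_cont a b (lt_trans ab epsd)).
by rewrite /c -expRD ler_expR; lra.
Qed.

Section Rates.
Local Open Scope ereal_scope.
Variable R : realType.

Lemma limn_esup_leD (u v : (\bar R)^nat) (c : R) (N : nat) :
  (forall n, (N <= n)%N -> u n <= v n + c%:E) ->
  limn_esup u <= limn_esup v + c%:E.
Proof.
move=> uv; rewrite -leeBlDr //; apply: le_ereal_inf_tmp => _ [V VF <-].
rewrite leeBlDr //.
have VNF : \oo (V `&` [set n | (N <= n)%N]) by apply: filterI => //; exists N.
apply: (@le_trans _ _ (ereal_sup (u @` (V `&` [set n | (N <= n)%N])))).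
  by apply: ereal_inf_lbound; exists (V `&` [set n | (N <= n)%N]).
apply: ge_ereal_sup => _ [n [Vn Nn] <-]; apply: le_trans (uv n Nn) _.
by rewrite leeD2r //; apply: ereal_sup_ubound; exists n.
Qed.

Lemma le_limn_esup (u v : (\bar R)^nat) :
  (forall n, u n <= v n) -> limn_esup u <= limn_esup v.
Proof.
move=> uv; have := @limn_esup_leD u v 0%R 0%N; rewrite adde0.
by apply => n _; rewrite adde0.
Qed.

Lemma rate_le n (v w : \bar R) : 0 <= v -> v <= w -> rate n v <= rate n w.
Proof.
move=> v0 vw; apply: lee_wpmul2l; first by rewrite lee_fin invr_ge0.
by rewrite lee_lne // in_itv /= leey andbT //; exact: le_trans vw.
Qed.

Lemma rate_expRM_le n (a b : \bar R) (c : R) : (0 < n)%N -> 0 <= a ->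
  (expR c)%:E * a <= b -> rate n a <= rate n b - (c / n%:R)%:E.
Proof.
move=> n0; rewrite le_eqVlt => /orP[/eqP <-|a0] ab.
  by rewrite /rate le0_lneNy // mulrNy gtr0_sg ?invr_gt0 ?ltr0n // mul1e leNye.
have : rate n ((expR c)%:E * a) <= rate n b.
  by apply: rate_le => //; apply/ltW/mule_gt0 => //; rewrite lte_fin expR_gt0.
rewrite {1}/rate lneM; last 2 first.
- by rewrite in_itv /= leey andbT lte_fin expR_gt0.
- by rewrite in_itv /= leey andbT a0.
rewrite lne_EFin ?expR_gt0 // expRK muleDr // -EFinM => rate_ab.
rewrite -(@leeD2rE _ ((c / n%:R)%:E)) // -addeA -EFinN -EFinD addNr adde0.
by rewrite addeC [rate n a]/rate mulrC.
Qed.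

Lemma limn_esup_rate_le (a b : nat -> \bar R) (eta C : R) :
  (forall n, 0 <= a n) ->
  (forall n, (0 < n)%N -> (expR (- (n%:R * eta) - C))%:E * a n <= b n) ->
  limn_esup (fun n => rate n (a n)) <= limn_esup (fun n => rate n (b n)) + eta%:E.
Proof.
move=> a0 ab; apply/lee_addgt0Pr => e e0; rewrite -addeA -EFinD.
apply: (@limn_esup_leD _ _ _ (Num.truncn (`|C| / e)).+1) => n Nn.
have n0 : (0 < n)%N by apply: leq_trans Nn.
apply: le_trans (rate_expRM_le n0 (a0 n) (ab n n0)) _; rewrite leeD2l // lee_fin.
have n_pos : (0 < n%:R :> R)%R by rewrite ltr0n.
have Cn : (`|C| < n%:R * e)%R.
  by rewrite -ltr_pdivrMr //; apply: lt_le_trans (truncnS_gt _) _; rewrite ler_nat.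
by have := ler_norm C; rewrite -mulNr ler_pdivrMr //; nra.
Qed.

Lemma liminf_right0_le (f g : R -> \bar R) :
  (forall e, f e <= g e) -> liminf_right0 f <= liminf_right0 g.
Proof.
move=> fg; apply: ge_ereal_sup => _ [r r0 <-].
apply: (@le_trans _ _ (ereal_inf [set g e | e in [set e | (0 < e < r)%R]])).
  apply: le_ereal_inf_tmp => _ [e er <-]; apply: le_trans (fg e).
  by apply: ereal_inf_lbound; exists e.
by apply: ereal_sup_ubound; exists r.
Qed.

Lemma liminf_right0_le_sup (f g : R -> \bar R) :
  (forall eta : R, (0 < eta)%R -> exists2 eps0 : R, (0 < eps0)%R &
     forall eps, (0 < eps < eps0)%R -> f eps <= g eps + eta%:E) ->
  liminf_right0 f <= ereal_sup (g @` `]0%R, +oo[%classic).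
Proof.
move=> fg; apply: ge_ereal_sup => _ [r r0 <-]; apply/lee_addgt0Pr => eta eta0.
have [eps0 eps00 fg_eta] := fg eta eta0.
pose e := (Num.min r eps0 / 2)%R.
have min_pos : (0 < Num.min r eps0)%R by rewrite lt_min r0 eps00.
have e_pos : (0 < e)%R by rewrite divr_gt0.
have min_r : (Num.min r eps0 <= r)%R by rewrite ge_min lexx.
have min_eps0 : (Num.min r eps0 <= eps0)%R by rewrite ge_min lexx orbT.
have [er eeps0] : (e < r)%R /\ (e < eps0)%R by rewrite /e; split; lra.
apply: (@le_trans _ _ (f e)).
  by apply: ereal_inf_lbound; exists e; rewrite //= e_pos.
apply: le_trans (fg_eta e _) _; first by rewrite e_pos.
by rewrite leeD2r //; apply: ereal_sup_ubound; exists e; rewrite //= in_itv /= e_pos.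
Qed.

End Rates.

Lemma iter_continuous (X : topologicalType) (T : X -> X) i :
  continuous T -> continuous (iter i T).
Proof.
move=> T_cont; elim: i => [|i IH] x /=; first exact: cvg_id.
exact: (continuous_comp (IH x) (T_cont _)).
Qed.

Lemma open_mdist_lt (R : realType) (X : metricType R) (a : X) (e : R) :
  open [set y | mdist a y < e].
Proof.
rewrite openE => y /= ay; apply/nbhs_ballP; exists (e - mdist a y) => /=.
  by rewrite subr_gt0.
by move=> z; rewrite ballEmdist /= => yz; have := metric_triangle a y z; lra.
Qed.

Section Pressure.
Variables (R : realType) (X : pointedMetricType R) (T : X -> X).
Variable mu : probability (@borel_space R X) R.
Hypothesis T_cont : continuous T.

Lemma bowen_ball_open n x e : open (bowen_ball T n x e).
Proof.
elim: n => [|n IH].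
  rewrite (_ : bowen_ball _ _ _ _ = setT); first exact: openT.
  by apply/funext => y; apply/propext; split => // _ i.
rewrite (_ : bowen_ball _ _ _ _ = bowen_ball T n x e `&`
    iter n T @^-1` [set y | mdist (iter n T x) y < e]).
  apply: openI => //; apply: open_comp; last exact: open_mdist_lt.
  by move=> y _; apply: iter_continuous.
apply/funext => y; apply/propext; split.
  by move=> xy; split => [i iN|]; apply: xy => //; apply: ltnW.
by move=> [xy xyn] i; rewrite ltnS leq_eqVlt => /orP[/eqP ->//|]; exact: xy.
Qed.

Lemma spanning_le_eps n (e1 e2 delta : R) F :
  e1 <= e2 -> spanning T mu n e1 delta F -> spanning T mu n e2 delta F.
Proof.
have bigcup_meas e :
    measurable (\bigcup_(x in [set` F]) bowen_ball T n x e : set borel_space).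
  by apply: sub_gen_smallest; apply: bigcup_open => x _; exact: bowen_ball_open.
move=> e12 span1; apply: le_trans span1 _; apply: le_measure; rewrite ?inE //.
by move=> z [x xF xz]; exists x => // i iN; exact: lt_le_trans (xz i iN) e12.
Qed.

Lemma spanning_le_delta n (e d1 d2 : R) F :
  d1 <= d2 -> spanning T mu n e d1 F -> spanning T mu n e d2 F.
Proof. by move=> d12; apply: le_trans; rewrite lee_fin; lra. Qed.

Local Open Scope ereal_scope.

Lemma Pn_fun_ge0 psi n e d : 0 <= Pn_fun T mu psi n e d.
Proof.
apply: le_ereal_inf_tmp => _ [F _ <-].
by rewrite lee_fin sumr_ge0 // => x _; exact: expR_ge0.
Qed.

Lemma Pn_pot_ge0 phi n e d : 0 <= Pn_pot T mu phi n e d.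
Proof.
apply: le_ereal_inf_tmp => _ [F _ <-].
by rewrite lee_fin sumr_ge0 // => x _; exact: expR_ge0.
Qed.

Lemma Pn_fun_le_delta psi n e (d1 d2 : R) :
  (d1 <= d2)%R -> Pn_fun T mu psi n e d2 <= Pn_fun T mu psi n e d1.
Proof.
move=> d12; apply: ereal_inf_le_tmp => _ [F FS <-]; exists F => //.
exact: spanning_le_delta FS.
Qed.

Lemma Pn_pot_le_delta phi n e (d1 d2 : R) :
  (d1 <= d2)%R -> Pn_pot T mu phi n e d2 <= Pn_pot T mu phi n e d1.
Proof.
move=> d12; apply: ereal_inf_le_tmp => _ [F FS <-]; exists F => //.
exact: spanning_le_delta FS.
Qed.

Lemma Pn_pot_le_eps phi n (e1 e2 d : R) :
  (e1 <= e2)%R -> Pn_pot T mu phi n e2 d <= Pn_pot T mu phi n e1 d.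
Proof.
move=> e12; apply: ereal_inf_le_tmp => _ [F FS <-]; exists F => //.
exact: spanning_le_eps FS.
Qed.

Lemma pressure_pot_sup phi : pressure_pot T mu phi =
  ereal_sup ((fun delta => ereal_sup ((fun eps =>
      limn_esup (fun n => rate n (Pn_pot T mu phi n eps delta)))
    @` `]0%R, +oo[%classic)) @` `]0%R, 1%R[%classic).
Proof.
set G := fun delta eps => limn_esup (fun n => rate n (Pn_pot T mu phi n eps delta)).
have limG delta : lim (G delta @ 0%R^'+) = ereal_sup (G delta @` `]0%R, +oo[%classic).
  apply/cvg_lim/nonincreasing_at_right_cvge => // e1 e2 _ _ e12.
  apply: le_limn_esup => n.
  exact: rate_le (Pn_pot_ge0 _ _ _ _) (Pn_pot_le_eps _ _ _ e12).
rewrite /pressure_pot -/G (_ : (fun delta => lim (G delta @ 0%R^'+)) =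
    fun delta => ereal_sup (G delta @` `]0%R, +oo[%classic)); last exact/funext.
apply: cvg_lim => //; apply: nonincreasing_at_right_cvge => [|d1 d2 _ _ d12].
  by rewrite bnd_simp.
apply: ge_ereal_sup => _ [e e0 <-].
apply: le_trans (ereal_sup_ubound _) => /=; last by exists e.
apply: le_limn_esup => n.
exact: rate_le (Pn_pot_ge0 _ _ _ _) (Pn_pot_le_delta _ _ _ d12).
Qed.

Lemma pressure_fun_sup psi : pressure_fun T mu psi =
  ereal_sup ((fun delta => liminf_right0 (fun eps =>
      limn_esup (fun n => rate n (Pn_fun T mu psi n eps delta))))
    @` `]0%R, 1%R[%classic).
Proof.
apply: cvg_lim => //; apply: nonincreasing_at_right_cvge => [|d1 d2 _ _ d12].
  by rewrite bnd_simp.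
apply: liminf_right0_le => e.
apply: le_limn_esup => n.
exact: rate_le (Pn_fun_ge0 _ _ _ _) (Pn_fun_le_delta _ _ _ d12).
Qed.

Lemma pressure_fun_le_pot (phi : nat -> X -> R) (psi : X -> R) (C : R) :
  (forall eta : R, (0 < eta)%R -> exists2 eps0 : R, (0 < eps0)%R &
     forall (eps : R) (n : nat) (delta : R),
       (0 < eps < eps0)%R -> (0 < n)%N -> (0 < delta < 1)%R ->
       (expR (- (n%:R * eta) - C))%:E * Pn_fun T mu psi n eps delta
         <= Pn_pot T mu phi n eps delta) ->
  pressure_fun T mu psi <= pressure_pot T mu phi.
Proof.
move=> fun_le_pot; rewrite pressure_fun_sup pressure_pot_sup.
apply: ge_ereal_sup => _ [delta delta01 <-].
apply: le_trans (ereal_sup_ubound _); last by exists delta.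
apply: liminf_right0_le_sup => eta eta0.
have [eps0 eps00 Peps] := fun_le_pot eta eta0; exists eps0 => // eps eps_lt.
apply: limn_esup_rate_le => [n|n n0]; first exact: Pn_fun_ge0.
by apply: Peps; rewrite // -[_ && _]/(delta \in `]0%R, 1%R[) inE.
Qed.

End Pressure.

Theorem lemma4p2 (R : realType) (X : pointedMetricType R) (T : X -> X)
    (phi : nat -> X -> R) (k : nat) (mu : probability borel_space R) :
  compact [set: X] ->
  continuous T ->
  supadditive_potential T phi ->
  (0 < k)%N ->
  T_invariant T mu ->
  ergodic T mu ->
  (exists C : R, forall eta : R, 0 < eta ->
     exists2 eps0 : R, 0 < eps0 &
       forall (eps : R) (n : nat) (delta : R),
         0 < eps < eps0 -> (0 < n)%N -> 0 < delta < 1 ->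
         ((expR (- (n%:R * eta) - C)%R)%:E
            * Pn_fun T mu (fun x => (phi k x / k%:R)%R) n eps delta
          <= Pn_pot T mu phi n eps delta)%E)
  /\ (pressure_fun T mu (fun x => (phi k x / k%:R)%R) <= pressure_pot T mu phi)%E.
Proof.
move=> cpt T_cont phi_supadd k_gt0 _ _.
have [C fun_le_pot] := Pn_fun_le_Pn_pot mu cpt phi_supadd k_gt0.
by split; [exists C | exact: pressure_fun_le_pot fun_le_pot].
Qed.
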